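(* Let $B$ be a nonzero real vector space, $\lfloor\cdot,\cdot\rfloor$ a symmetric bilinear form on $B$, $q(b):=\tfrac12\lfloor b,b\rfloor$, let $f$ be a BC--function on $B$ and $c\in B$. Define $f_c\colon B\to\,]{-}\infty,\infty]$ by $f_c(b):=f(b+c)-\lfloor b,c\rfloor-q(c)$. Then $f_c$ is a BC--function, $\mathrm{dom}\,f_c=\mathrm{dom}\,f-c$ and ${\cal P}_q(f_c)={\cal P}_q(f)-c$.
   Context: For a proper convex $f\colon B\to\,]{-}\infty,\infty]$, $\mathrm{dom}\,f:=\{b\colon f(b)\in\mathbb{R}\}$ and $f^@(c):=\sup_{b\in B}[\lfloor b,c\rfloor-f(b)]$. A BC--function is a proper convex $f$ with $f^@(b)\ge f(b)\ge q(b)$ for all $b\in B$. For $h\ge q$, ${\cal P}_q(h):=\{b\colon h(b)=q(b)\}$. *)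

From HB Require Import structures.
From mathcomp Require Import all_boot all_order all_algebra.
From mathcomp Require Import all_classical all_reals ereal.
Set Implicit Arguments. Unset Strict Implicit. Unset Printing Implicit Defensive.
Import Order.TTheory GRing.Theory Num.Theory.
Local Open Scope classical_set_scope.
Local Open Scope ring_scope.

Definition symmetric_bilinear (R : realType) (B : lmodType R)
    (bf : B -> B -> R) : Prop :=
  [/\ forall a b, bf a b = bf b a,
      forall (r : R) a b c, bf (r *: a + b) c = r * bf a c + bf b c
    & forall (r : R) a b c, bf c (r *: a + b) = r * bf c a + bf c b].

Definition qf (R : realType) (B : lmodType R) (bf : B -> B -> R) (b : B) : R :=
  bf b b / 2.

Definition edom (R : realType) (B : lmodType R) (f : B -> \bar R) : set B :=
  [set b | f b \is a fin_num].

Definition proper_convex (R : realType) (B : lmodType R) (f : B -> \bar R)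
    : Prop :=
  [/\ forall b, f b != -oo%E,
      exists b, f b \is a fin_num
    & forall (a b : B) (t : R), 0 < t < 1 ->
        (f (t *: a + (1 - t) *: b)%R <= t%:E * f a + (1 - t)%R%:E * f b)%E].

Definition fenchel_at (R : realType) (B : lmodType R) (bf : B -> B -> R)
    (f : B -> \bar R) (c : B) : \bar R :=
  ereal_sup [set ((bf b c)%:E - f b)%E | b in [set: B]].

Definition BC_function (R : realType) (B : lmodType R) (bf : B -> B -> R)
    (f : B -> \bar R) : Prop :=
  proper_convex f /\
  forall b, (fenchel_at bf f b >= f b)%E /\ (f b >= (qf bf b)%:E)%E.

Definition Pq (R : realType) (B : lmodType R) (bf : B -> B -> R)
    (h : B -> \bar R) : set B :=
  [set b | h b = (qf bf b)%:E].

Definition fshift (R : realType) (B : lmodType R) (bf : B -> B -> R)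
    (f : B -> \bar R) (c : B) : B -> \bar R :=
  fun b => (f (b + c)%R - (bf b c)%:E - (qf bf c)%:E)%E.

From HB Require Import structures.
From mathcomp Require Import all_boot all_order all_algebra.
From mathcomp Require Import all_classical all_reals ereal.
From mathcomp Require Import lra.
Set Implicit Arguments. Unset Strict Implicit. Unset Printing Implicit Defensive.
Import Order.TTheory GRing.Theory Num.Theory.
Local Open Scope classical_set_scope.
Local Open Scope ring_scope.

(* Since q(b + c) = q(b) + [b,c] + q(c), the shift reads
   f_c(b) = f(b + c) + q(b) - q(b + c): it is the translate of f by c plus a
   real affine function of b.  Hence f_c is proper convex, its domain is that
   of f moved by -c, and f_c - q is f - q moved by -c, which gives f_c >= q and
   the description of P_q(f_c).  Reindexing the supremum by b |-> b + c shows
   that the Fenchel transform commutes with the shift, (f_c)^@ = (f^@)_c, and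
   since the shift is monotone, f^@ >= f yields (f_c)^@ >= f_c. *)

Lemma image_subr (V : zmodType) (A : set V) (c : V) :
  [set b - c | b in A] = [set b | A (b + c)].
Proof.
apply/seteqP; split=> b /=; first by case=> a Aa <-; rewrite subrK.
by move=> Abc; exists (b + c); rewrite ?addrK.
Qed.

Lemma ereal_sup_addr (R : realType) (S : set (\bar R)) (r : R) :
  ereal_sup [set x + r%:E | x in S]%E = (ereal_sup S + r%:E)%E.
Proof.
apply/eqP; rewrite eq_le; apply/andP; split.
  by apply: ge_ereal_sup => _ [x Sx <-]; apply: leeD2r; exact: ereal_sup_ubound.
have : (ereal_sup S <= ereal_sup [set x + r%:E | x in S] - r%:E)%E.
  apply: ge_ereal_sup => x Sx; rewrite -[x](addeK (x := r%:E)) //.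
  by apply: leeD2r; apply: ereal_sup_ubound; exists x.
by move/(leeD2r r%:E); rewrite subeK.
Qed.

Section ProperConvex.
Variables (R : realType) (B : lmodType R).
Local Open Scope ereal_scope.

Lemma proper_convex_translate (f : B -> \bar R) (c : B) :
  proper_convex f -> proper_convex (fun b => f (b + c)%R).
Proof.
case=> [fNy [b0 fb0] fcvx]; split=> [b||a b t t01]; first exact: fNy.
  by exists (b0 - c)%R; rewrite subrK.
have -> : (t *: a + (1 - t) *: b + c = t *: (a + c) + (1 - t) *: (b + c))%R.
  by rewrite !scalerDr addrACA -scalerDl subrKC scale1r.
exact: fcvx.
Qed.

Lemma proper_convexD_affine (f : B -> \bar R) (l : B -> R) :
  proper_convex f ->
  (forall a b t, l (t *: a + (1 - t) *: b) = t * l a + (1 - t) * l b)%R ->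
  proper_convex (fun b => f b + (l b)%:E).
Proof.
move=> [fNy [b0 fb0] fcvx] l_affine; split=> [b||a b t t01].
- by case: (f b) (fNy b).
- by exists b0; rewrite fin_numD fb0.
have [t_gt0 t_lt1] := andP t01; have t'_gt0 : (0 < 1 - t)%R by rewrite subr_gt0.
rewrite l_affine; set m := (t *: a + (1 - t) *: b)%R.
move: (fcvx a b t t01) (fNy a) (fNy b) (fNy m).
case: (f a) => [x| |]; case: (f b) => [y| |]; case: (f m) => [z| |] //=.
- by rewrite -!EFinM -!EFinD !lee_fin !mulrDr => fz _ _ _; lra.
all: move=> *; rewrite ?addye // ?gt0_muley ?lte_fin // ?addey //; exact: leey.
Qed.

End ProperConvex.

Section Shift.
Variables (R : realType) (B : lmodType R) (bf : B -> B -> R).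
Hypothesis bf_symbil : symmetric_bilinear bf.

Let bfC a b : bf a b = bf b a.
Proof. by case: bf_symbil. Qed.

Let bfDl a b c : bf (a + b) c = bf a c + bf b c.
Proof. by case: bf_symbil => _ h _; have := h 1 a b c; rewrite scale1r mul1r. Qed.

Let bf0l c : bf 0 c = 0.
Proof. by apply: (@addrI _ (bf 0 c)); rewrite -bfDl !addr0. Qed.

Let bfZl r a c : bf (r *: a) c = r * bf a c.
Proof. by case: bf_symbil => _ h _; have := h r a 0 c; rewrite addr0 bf0l addr0. Qed.

Lemma qfD b c : qf bf (b + c) = qf bf b + bf b c + qf bf c.
Proof. rewrite /qf !bfDl !(bfC _ (b + c)) !bfDl (bfC c b); lra. Qed.

Local Open Scope ereal_scope.

Lemma fshiftE (f : B -> \bar R) c b :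
  fshift bf f c b = f (b + c)%R + (- bf b c - qf bf c)%:E.
Proof. by rewrite /fshift -addeA -EFinD. Qed.

Lemma fshiftE_qf (f : B -> \bar R) c b :
  fshift bf f c b = f (b + c)%R + (qf bf b - qf bf (b + c))%:E.
Proof. by rewrite fshiftE qfD; congr (_ + _%:E); lra. Qed.

Lemma le_fshift (f g : B -> \bar R) c b :
  f (b + c)%R <= g (b + c)%R -> fshift bf f c b <= fshift bf g c b.
Proof. by rewrite !fshiftE; apply: leeD2r. Qed.

Lemma proper_convex_fshift (f : B -> \bar R) c :
  proper_convex f -> proper_convex (fshift bf f c).
Proof.
move=> fpc.
have -> : fshift bf f c = fun b => f (b + c)%R + (- bf b c - qf bf c)%:E.
  by apply/funext => b; exact: fshiftE.
apply: (proper_convexD_affine (l := fun b => - bf b c - qf bf c)%R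
  (proper_convex_translate c fpc)) => a b t.
by rewrite bfDl !bfZl /qf; lra.
Qed.

Lemma edom_fshift (f : B -> \bar R) c :
  edom (fshift bf f c) = [set b - c | b in edom f]%R.
Proof.
by rewrite image_subr; apply/seteqP; split=> b; rewrite /edom /= fshiftE fin_numD andbT.
Qed.

Lemma Pq_fshift (f : B -> \bar R) c :
  Pq bf (fshift bf f c) = [set b - c | b in Pq bf f]%R.
Proof.
rewrite image_subr; apply/seteqP; split=> b; rewrite /Pq /= fshiftE_qf.
  move/(congr1 (fun x => x - (qf bf b - qf bf (b + c))%:E)).
  by rewrite addeK // -EFinB => ->; congr EFin; lra.
by move=> ->; rewrite -EFinD; congr EFin; lra.
Qed.

Lemma qf_le_fshift (f : B -> \bar R) c b :
  ((qf bf b)%:E <= fshift bf f c b) = ((qf bf (b + c))%:E <= f (b + c)%R).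
Proof.
by rewrite fshiftE_qf -[RHS](leeD2rE (x := (qf bf b - qf bf (b + c))%:E)) //
  -EFinD subrKC.
Qed.

Lemma fenchel_at_fshift (f : B -> \bar R) c d :
  fenchel_at bf (fshift bf f c) d = fshift bf (fenchel_at bf f) c d.
Proof.
rewrite fshiftE -ereal_sup_addr /fenchel_at; congr ereal_sup.
have shiftE b : (bf b d)%:E - fshift bf f c b =
    (bf (b + c) (d + c))%:E - f (b + c)%R + (- bf d c - qf bf c)%:E.
  rewrite fshiftE; case: (f (b + c)%R) => [x||] //=; congr EFin.
  rewrite !bfDl !(bfC _ (d + c)) !bfDl /qf (bfC c b) (bfC d b); lra.
apply/seteqP; split=> x /=.
  case=> b _ <-; rewrite shiftE.
  by exists ((bf (b + c) (d + c))%:E - f (b + c)%R) => //; exists (b + c)%R.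
by case=> _ [e _ <-] <-; exists (e - c)%R => //; rewrite shiftE subrK.
Qed.

Lemma BC_function_fshift (f : B -> \bar R) c :
  BC_function bf f -> BC_function bf (fshift bf f c).
Proof.
case=> fpc fBC; split=> [|b]; first exact: proper_convex_fshift.
split; first by rewrite fenchel_at_fshift; apply: le_fshift; exact: (fBC _).1.
by rewrite qf_le_fshift; exact: (fBC _).2.
Qed.

End Shift.

Theorem lemma3p13 (R : realType) (B : lmodType R) (bf : B -> B -> R)
    (f : B -> \bar R) (c : B) :
  (exists b : B, b != 0) ->
  symmetric_bilinear bf ->
  BC_function bf f ->
  [/\ BC_function bf (fshift bf f c),
      edom (fshift bf f c) = [set b - c | b in edom f]
    & Pq bf (fshift bf f c) = [set b - c | b in Pq bf f]].
Proof.
move=> _ bf_symbil fBC.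
by split; [exact: BC_function_fshift | exact: edom_fshift | exact: Pq_fshift].
Qed.
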